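(* Let $r\ge3$, $n>r$. The elements $K_1K_2\cdots K_n-v^r$ and $(K_i-1)(K_i-v)(K_i-v^2)\cdots(K_i-v^r)$ ($1\le i\le n$) of $\mathbf{U}(\widehat{\mathfrak{gl}}_n)$ act as zero on the tensor space $V^{\otimes r}$. Consequently $\widehat{\mathbf{S}}_v(n,r)$ is a quotient of the algebra $T$, via a surjection $\gamma:T\to\widehat{\mathbf{S}}_v(n,r)$ sending each generator to its action on $V^{\otimes r}$.
   Context: $\mathbf{U}(\widehat{\mathfrak{gl}}_n)$ is the $\mathbb{Q}(v)$-algebra with generators $E_i,F_i,K_i^{\pm1}$ ($1\le i\le n$, indices mod $n$) and relations (Q1) $K_iK_j=K_jK_i$; (Q2) $K_iK_i^{-1}=K_i^{-1}K_i=1$; (Q3) $K_iE_j=v^{\epsilon^+(i,j)}E_jK_i$; (Q4) $K_iF_j=v^{-\epsilon^+(i,j)}F_jK_i$, where $\epsilon^+(i,j)=1$ if $j=i$, $-1$ if $j\equiv i-1\pmod n$, $0$ otherwise; (Q5) $E_iF_j-F_jE_i=\delta_{ij}\frac{K_iK_{i+1}^{-1}-K_i^{-1}K_{i+1}}{v-v^{-1}}$; (Q6–Q7) $E_iE_j=E_jE_i$, $F_iF_j=F_jF_i$ if $i-j\not\equiv\pm1$; (Q8–Q9) $E_i^2E_j-(v+v^{-1})E_iE_jE_i+E_jE_i^2=0$, $F_i^2F_j-(v+v^{-1})F_iF_jF_i+F_jF_i^2=0$ if $i-j\equiv\pm1\pmod n$. $T$ is the quotient of $\mathbf{U}(\widehat{\mathfrak{gl}}_n)$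 by the additional relations $K_1\cdots K_n=v^r$ and $\prod_{j=0}^r(K_i-v^j)=0$ for all $i$. $V$ has basis $e_t$ ($t\in\mathbb{Z}$) with $E_ie_{t+1}=e_t$ if $i\equiv t\pmod n$ (else $0$), $F_ie_t=e_{t+1}$ if $i\equiv t$ (else $0$), $K_ie_t=ve_t$ if $i\equiv t$ (else $e_t$); $V^{\otimes r}$ is a module via iterating $\Delta(E_i)=E_i\otimes K_iK_{i+1}^{-1}+1\otimes E_i$, $\Delta(F_i)=K_i^{-1}K_{i+1}\otimes F_i+F_i\otimes1$, $\Delta(K_i^{\pm1})=K_i^{\pm1}\otimes K_i^{\pm1}$. $\widehat{\mathbf{S}}_v(n,r)$ is the image of $\mathbf{U}(\widehat{\mathfrak{gl}}_n)$ in $\operatorname{End}_{\mathbb{Q}(v)}(V^{\otimes r})$. *)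

From HB Require Import structures.
From mathcomp Require Import all_boot all_order all_algebra.
From mathcomp Require Import fraction.
Set Implicit Arguments. Unset Strict Implicit. Unset Printing Implicit Defensive.
Import Order.TTheory GRing.Theory Num.Theory.
Local Open Scope ring_scope.

Definition Qv : fieldType := {fraction {poly rat}}.
Definition v : Qv := @FracField.tofrac _ 'X.

(* A vector of V^{(x)r}: a finite formal linear combination of basis tensors
   e_{t_1} (x) ... (x) e_{t_r}, the basis tensor being indexed by the
   sequence [:: t_1; ...; t_r] of integers. *)
Definition vec := seq (Qv * seq int).

Definition coef (x : vec) (s : seq int) : Qv :=
  \sum_(p <- x) (if p.2 == s then p.1 else 0).

(* A linear operator, given by the images of the basis tensors. *)
Definition op := seq int -> vec.

Definition scalev (c : Qv) (x : vec) : vec := [seq (c * p.1, p.2) | p <- x].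
Definition applyop (A : op) (x : vec) : vec :=
  flatten [seq scalev p.1 (A p.2) | p <- x].

Definition opid : op := fun s => [:: (1, s)].
Definition op0 : op := fun _ => [::].
Definition opcomp (A B : op) : op := fun s => applyop A (B s).
Definition opadd (A B : op) : op := fun s => A s ++ B s.
Definition opscale (c : Qv) (A : op) : op := fun s => scalev c (A s).
Definition opsub (A B : op) : op := opadd A (opscale (-1) B).
Definition opprod (l : seq op) : op := foldr opcomp opid l.

Definition opeq (r : nat) (A B : op) : Prop :=
  forall t : seq int, size t = r -> forall s, coef (A t) s = coef (B t) s.

Definition congr_mod (n : nat) (t : int) (i : nat) : bool :=
  (n%:Z %| t - i%:Z)%Z.

(* action of K_i, K_i^{-1} on the basis vector e_t of V *)
Definition Kfac (n i : nat) (t : int) : Qv := if congr_mod n t i then v else 1.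
Definition Kifac (n i : nat) (t : int) : Qv := if congr_mod n t i then v^-1 else 1.

(* Actions on V^{(x)r}, obtained by iterating the coproduct
     Delta(E_i) = E_i (x) K_i K_{i+1}^{-1} + 1 (x) E_i,
     Delta(F_i) = K_i^{-1} K_{i+1} (x) F_i + F_i (x) 1,
     Delta(K_i^{+-1}) = K_i^{+-1} (x) K_i^{+-1},
   splitting V^{(x)r} = V (x) V^{(x)(r-1)} along the first tensor factor. *)
Definition Kop (n i : nat) : op := fun s => [:: (\prod_(t <- s) Kfac n i t, s)].
Definition Kiop (n i : nat) : op := fun s => [:: (\prod_(t <- s) Kifac n i t, s)].

(* E_i e_{t+1} = e_t if i == t (mod n), else 0 *)
Fixpoint Eop (n i : nat) (s : seq int) : vec :=
  match s with
  | [::] => [::]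
  | t :: s' =>
      (if congr_mod n (t - 1) i
       then [:: (\prod_(u <- s') (Kfac n i u * Kifac n i.+1 u), (t - 1) :: s')]
       else [::])
      ++ [seq (p.1, t :: p.2) | p <- Eop n i s']
  end.

(* F_i e_t = e_{t+1} if i == t (mod n), else 0 *)
Fixpoint Fop (n i : nat) (s : seq int) : vec :=
  match s with
  | [::] => [::]
  | t :: s' =>
      [seq (Kifac n i t * Kfac n i.+1 t * p.1, t :: p.2) | p <- Fop n i s']
      ++ (if congr_mod n t i then [:: (1, (t + 1) :: s')] else [::])
  end.

(* epsilon^+(i,j) for indices i, j in {0,...,n-1} (index 0 plays the role of n) *)
Definition epsp (n i j : nat) : int :=
  if j == i then 1 else if (j.+1 %% n)%N == i then -1 else 0.

Definition adj (n i j : nat) : bool := (i == (j.+1 %% n)%N) || (j == (i.+1 %% n)%N).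

Definition U_relations_hold (n r : nat) (E F K Ki : nat -> op) : Prop :=
  forall i j : 'I_n,
  opeq r (opcomp (K i) (K j)) (opcomp (K j) (K i)) /\
  opeq r (opcomp (K i) (Ki i)) opid /\
           opeq r (opcomp (Ki i) (K i)) opid /\
  opeq r (opcomp (K i) (E j)) (opscale (v ^ epsp n i j) (opcomp (E j) (K i))) /\
  opeq r (opcomp (K i) (F j)) (opscale (v ^ (- epsp n i j)) (opcomp (F j) (K i))) /\
  opeq r (opsub (opcomp (E i) (F j)) (opcomp (F j) (E i)))
             (if i == j then
                opscale (v - v^-1)^-1
                  (opsub (opcomp (K i) (Ki ((i.+1 %% n)%N)))
                         (opcomp (Ki i) (K ((i.+1 %% n)%N))))
              else op0) /\
           (~~ adj n i j ->
              opeq r (opcomp (E i) (E j)) (opcomp (E j) (E i)) /\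
              opeq r (opcomp (F i) (F j)) (opcomp (F j) (F i))) /\
           (adj n i j ->
              opeq r (opadd (opsub (opprod [:: E i; E i; E j])
                                   (opscale (v + v^-1) (opprod [:: E i; E j; E i])))
                            (opprod [:: E j; E i; E i])) op0 /\
              opeq r (opadd (opsub (opprod [:: F i; F i; F j])
                                   (opscale (v + v^-1) (opprod [:: F i; F j; F i])))
                            (opprod [:: F j; F i; F i])) op0).

Definition T_extra_relations_hold (n r : nat) (K : nat -> op) : Prop :=
  opeq r (opsub (opprod [seq K i | i <- iota 0 n]) (opscale (v ^+ r) opid)) op0 /\
  (forall i : 'I_n,
     opeq r (opprod [seq opsub (K i) (opscale (v ^+ j) opid) | j <- iota 0 r.+1]) op0).

From HB Require Import structures.
From mathcomp Require Import all_boot all_order all_algebra.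
From mathcomp Require Import fraction.
From mathcomp Require Import ring zify.
From Stdlib Require Import FunctionalExtensionality.
Set Implicit Arguments. Unset Strict Implicit. Unset Printing Implicit Defensive.
Import Order.TTheory GRing.Theory Num.Theory.
Local Open Scope ring_scope.

(* The generators act on basis tensors e_{t_1} (x) ... (x) e_{t_r} by monomial operators.
   K_i is diagonal with eigenvalue v^c, where c <= r counts the t_k congruent to i mod n;
   hence (K_i - 1)(K_i - v)...(K_i - v^r) kills every basis tensor, and since each t_k has
   exactly one residue, K_1...K_n acts as v^r.
   The relations (Q1)-(Q9) are checked coefficientwise, by induction on the number of
   tensor factors: splitting off the first factor, the coproduct gives
   E_i = E_i (x) K_i K_{i+1}^-1 + 1 (x) E_i  and  F_i = K_i^-1 K_{i+1} (x) F_i + F_i (x) 1,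
   so each relation reduces to the same relation on fewer factors, to identities among the
   monomial operators E_i, F_i on V (E_i^2 = 0, and E_i E_j E_i = 0 for adjacent i, j,
   which needs n >= 3), and to the scalars by which K_i K_{i+1}^-1 is rescaled when moved
   past E_j or F_j. *)

Definition opcoef (A : op) (t s : seq int) : Qv := coef (A t) s.

Definition op_equiv (A B : op) : Prop := forall t s, opcoef A t s = opcoef B t s.

Definition lincomb (x : vec) (f : seq int -> Qv) : Qv := \sum_(p <- x) p.1 * f p.2.

Lemma coef_nil s : coef [::] s = 0.
Proof. by rewrite /coef big_nil. Qed.

Lemma coef_cons p x s : coef (p :: x) s = (if p.2 == s then p.1 else 0) + coef x s.
Proof. by rewrite /coef big_cons. Qed.

Lemma coef_cat x y s : coef (x ++ y) s = coef x s + coef y s.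
Proof. by rewrite /coef big_cat. Qed.

Lemma coef_scalev c x s : coef (scalev c x) s = c * coef x s.
Proof.
elim: x => [|p x IH]; first by rewrite /= !coef_nil mulr0.
by rewrite /= !coef_cons IH mulrDr /=; case: ifP; rewrite ?mulr0.
Qed.

Lemma lincomb_nil f : lincomb [::] f = 0.
Proof. by rewrite /lincomb big_nil. Qed.

Lemma lincomb_cons p x f : lincomb (p :: x) f = p.1 * f p.2 + lincomb x f.
Proof. by rewrite /lincomb big_cons. Qed.

Lemma coef_applyop A x s : coef (applyop A x) s = lincomb x (fun u => coef (A u) s).
Proof.
elim: x => [|p x IH]; first by rewrite lincomb_nil /applyop /= coef_nil.
by rewrite lincomb_cons -IH /applyop /= coef_cat coef_scalev.
Qed.

Lemma lincomb_coef x f (S : seq (seq int)) :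
  uniq S -> {subset [seq p.2 | p <- x] <= S} ->
  lincomb x f = \sum_(u <- S) coef x u * f u.
Proof.
move=> uS; elim: x => [|p x IH] sub.
  by rewrite lincomb_nil big1 // => u _; rewrite coef_nil mul0r.
rewrite lincomb_cons IH; last by move=> u hu; apply: sub; rewrite /= inE hu orbT.
have pS : p.2 \in S by apply: sub; rewrite /= inE eqxx.
under [in RHS]eq_bigr => u _ do rewrite coef_cons mulrDl.
rewrite big_split /=; congr (_ + _).
rewrite (bigD1_seq p.2) //= eqxx big1 ?addr0 // => u /negbTE hu.
by rewrite eq_sym hu mul0r.
Qed.

Lemma lincomb_coef_eq x y f :
  (forall s, coef x s = coef y s) -> lincomb x f = lincomb y f.
Proof.
move=> xy; set S := undup ([seq p.2 | p <- x] ++ [seq p.2 | p <- y]).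
have uS : uniq S by rewrite undup_uniq.
rewrite (@lincomb_coef x f S uS); last by move=> u hu; rewrite mem_undup mem_cat hu.
rewrite (@lincomb_coef y f S uS); last by move=> u hu; rewrite mem_undup mem_cat hu orbT.
by apply: eq_bigr => u _; rewrite xy.
Qed.

Lemma lincombD x f g : lincomb x (fun u => f u + g u) = lincomb x f + lincomb x g.
Proof. by rewrite /lincomb -big_split; apply: eq_bigr => p _; rewrite mulrDr. Qed.

Lemma eq_lincomb x f g : f =1 g -> lincomb x f = lincomb x g.
Proof. by move=> fg; apply: eq_bigr => p _; rewrite fg. Qed.

Lemma opcoefD A B t s : opcoef (opadd A B) t s = opcoef A t s + opcoef B t s.
Proof. exact: coef_cat. Qed.

Lemma opcoefZ c A t s : opcoef (opscale c A) t s = c * opcoef A t s.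
Proof. exact: coef_scalev. Qed.

Lemma opcoefB A B t s : opcoef (opsub A B) t s = opcoef A t s - opcoef B t s.
Proof. by rewrite opcoefD opcoefZ mulN1r. Qed.

Lemma opcoef0 t s : opcoef op0 t s = 0.
Proof. exact: coef_nil. Qed.

Lemma opcoef_comp A B t s : opcoef (opcomp A B) t s = lincomb (B t) (fun u => opcoef A u s).
Proof. exact: coef_applyop. Qed.

Lemma opcoef_compDl A B C t s :
  opcoef (opcomp (opadd A B) C) t s = opcoef (opcomp A C) t s + opcoef (opcomp B C) t s.
Proof. by rewrite !opcoef_comp -lincombD; apply: eq_lincomb => u; rewrite opcoefD. Qed.

Lemma opcoef_compr X M N t s : (forall w, opcoef M t w = opcoef N t w) ->
  opcoef (opcomp X M) t s = opcoef (opcomp X N) t s.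
Proof. by move=> MN; rewrite !opcoef_comp; apply: lincomb_coef_eq. Qed.

Lemma op_equiv_opeq r A B : op_equiv A B -> opeq r A B.
Proof. by move=> AB t _; apply: AB. Qed.

Lemma scalevA c d x : scalev c (scalev d x) = scalev (c * d) x.
Proof. by elim: x => [|p x IH] //=; rewrite IH mulrA. Qed.

Lemma scale1v x : scalev 1 x = x.
Proof. by elim: x => [|[a b] x IH] //=; rewrite IH mul1r. Qed.

Lemma scalev_cat c x y : scalev c (x ++ y) = scalev c x ++ scalev c y.
Proof. exact: map_cat. Qed.

Lemma scalev_flatten c l : scalev c (flatten l) = flatten [seq scalev c x | x <- l].
Proof. by elim: l => [|x l IH] //=; rewrite scalev_cat IH. Qed.

Lemma applyop_cat A x y : applyop A (x ++ y) = applyop A x ++ applyop A y.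
Proof. by rewrite /applyop map_cat flatten_cat. Qed.

Lemma applyop_scalev A c x : applyop A (scalev c x) = scalev c (applyop A x).
Proof.
elim: x => [|p x IH] //=.
by rewrite /applyop /= -/(applyop A x) scalev_cat -IH scalevA.
Qed.

Lemma applyop_comp A B x : applyop A (applyop B x) = applyop (opcomp A B) x.
Proof.
elim: x => [|p x IH] //.
rewrite [applyop B _]/applyop /= -/(applyop B x) applyop_cat applyop_scalev IH.
by rewrite [RHS]/applyop /= -/(applyop _ x).
Qed.

Lemma applyop_id x : applyop opid x = x.
Proof. by elim: x => [|[a b] x IH] //=; rewrite /applyop /= -/(applyop opid x) IH mulr1. Qed.

Lemma opcompA A B C : opcomp A (opcomp B C) = opcomp (opcomp A B) C.
Proof. by apply: functional_extensionality => s; rewrite /opcomp applyop_comp. Qed.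

Lemma opcomp_idr A : opcomp A opid = A.
Proof.
by apply: functional_extensionality => s; rewrite /opcomp /opid /applyop /= cats0 scale1v.
Qed.

Lemma opcomp_idl A : opcomp opid A = A.
Proof. by apply: functional_extensionality => s; rewrite /opcomp applyop_id. Qed.

Lemma opcompDr A B C : opcomp A (opadd B C) = opadd (opcomp A B) (opcomp A C).
Proof. by apply: functional_extensionality => s; rewrite /opcomp /opadd applyop_cat. Qed.

Lemma opcompZr A c B : opcomp A (opscale c B) = opscale c (opcomp A B).
Proof. by apply: functional_extensionality => s; rewrite /opcomp /opscale applyop_scalev. Qed.

Lemma opcompZl c A B : opcomp (opscale c A) B = opscale c (opcomp A B).
Proof.
apply: functional_extensionality => s.
rewrite /opcomp /opscale /applyop scalev_flatten -map_comp.
by congr flatten; apply: eq_map => p /=; rewrite !scalevA mulrC.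
Qed.

Lemma opprod3 A B C : opprod [:: A; B; C] = opcomp A (opcomp B C).
Proof. by rewrite /opprod /= opcomp_idr. Qed.

(** * Monomial operators on V tensored with operators on the remaining factors *)

(* [f t = Some (c, u)] encodes [f e_t = c e_u]; [None] encodes [f e_t = 0]. *)
Definition monop := int -> option (Qv * int).

Definition tens (f : monop) (B : op) : op := fun s =>
  if s is t :: s' then
    (if f t is Some (c, u) then [seq (c * q.1, u :: q.2) | q <- B s'] else [::])
  else [::].

Definition mcomp (f g : monop) : monop := fun t =>
  if g t is Some (c, u) then (if f u is Some (d, w) then Some (c * d, w) else None) else None.
Definition mid : monop := fun t => Some (1, t).
Definition mzero : monop := fun _ => None.
Definition mscale (k : Qv) (f : monop) : monop := fun t =>
  if f t is Some (c, u) then Some (k * c, u) else None.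

Lemma tens_comp f B g C : opcomp (tens f B) (tens g C) = tens (mcomp f g) (opcomp B C).
Proof.
apply: functional_extensionality => [[|t s]] //.
rewrite /opcomp /tens /mcomp; case: (g t) => [[c u]|] //.
rewrite /applyop -map_comp /comp /=; case: (f u) => [[d w]|].
  rewrite map_flatten -map_comp; congr flatten; apply: eq_map => q /=.
  by rewrite /scalev -!map_comp; apply: eq_map => p /=; congr (_, _); ring.
by elim: (C s) => [|q x IH] //=; rewrite IH.
Qed.

Lemma tensDr f B C : opadd (tens f B) (tens f C) = tens f (opadd B C).
Proof.
apply: functional_extensionality => [[|t s]] //=.
by rewrite /opadd /=; case: (f t) => [[c u]|] //; rewrite map_cat.
Qed.

Lemma tensZr f c B : tens f (opscale c B) = opscale c (tens f B).
Proof.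
apply: functional_extensionality => [[|t s]] //=.
rewrite /opscale /=; case: (f t) => [[d u]|] //.
by rewrite /scalev -!map_comp; apply: eq_map => p /=; congr (_, _); ring.
Qed.

Lemma tensZl k f B : tens (mscale k f) B = opscale k (tens f B).
Proof.
apply: functional_extensionality => [[|t s]] //=.
rewrite /opscale /mscale /=; case: (f t) => [[d u]|] //.
by rewrite /scalev -!map_comp; apply: eq_map => p /=; congr (_, _); ring.
Qed.

Lemma tens0l B : tens mzero B = op0.
Proof. by apply: functional_extensionality => [[|t s]]. Qed.

Lemma tens0r f : tens f op0 = op0.
Proof. by apply: functional_extensionality => [[|t s]] //=; case: (f t) => [[]|]. Qed.

Lemma mcompA f g h : mcomp f (mcomp g h) = mcomp (mcomp f g) h.
Proof.
apply: functional_extensionality => t; rewrite /mcomp.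
case: (h t) => [[c u]|] //; case: (g u) => [[d w]|] //; case: (f w) => [[e z]|] //.
by rewrite mulrA.
Qed.

Lemma mcomp_idl f : mcomp mid f = f.
Proof.
apply: functional_extensionality => t; rewrite /mcomp /mid.
by case: (f t) => [[c u]|] //; rewrite mulr1.
Qed.

Lemma mcomp_idr f : mcomp f mid = f.
Proof.
apply: functional_extensionality => t; rewrite /mcomp /mid.
by case: (f t) => [[c u]|] //; rewrite mul1r.
Qed.

Lemma mcomp0l f : mcomp mzero f = mzero.
Proof. by apply: functional_extensionality => t; rewrite /mcomp; case: (f t) => [[]|]. Qed.

Lemma mcomp0r f : mcomp f mzero = mzero.
Proof. by []. Qed.

Lemma mcompZl a f g : mcomp (mscale a f) g = mscale a (mcomp f g).
Proof.
apply: functional_extensionality => t; rewrite /mcomp /mscale.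
by case: (g t) => [[c u]|] //; case: (f u) => [[d w]|] //; rewrite mulrCA.
Qed.

Lemma mcompZr a f g : mcomp f (mscale a g) = mscale a (mcomp f g).
Proof.
apply: functional_extensionality => t; rewrite /mcomp /mscale.
by case: (g t) => [[c u]|] //; case: (f u) => [[d w]|] //; rewrite mulrA.
Qed.

Lemma mscaleA a b f : mscale a (mscale b f) = mscale (a * b) f.
Proof.
apply: functional_extensionality => t; rewrite /mscale.
by case: (f t) => [[c u]|] //; rewrite mulrA.
Qed.

Lemma mscale0 a : mscale a mzero = mzero.
Proof. by []. Qed.

Lemma opcoef_tens f B t s' s : opcoef (tens f B) (t :: s') s =
  if f t is Some (c, x) then
    (if s is u :: us then (if x == u then c * opcoef B s' us else 0) else 0)
  else 0.
Proof.
rewrite /opcoef /tens; case: (f t) => [[c x]|]; last by rewrite coef_nil.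
elim: (B s') s => [|q B' IH] [|u us]; rewrite ?coef_nil //=.
- by case: ifP; rewrite ?mulr0.
- by rewrite coef_cons IH addr0.
rewrite coef_cons IH eqseq_cons /opcoef coef_cons.
by case: (x == u) => /=; rewrite ?addr0 // mulrDr; case: ifP; rewrite ?mulr0.
Qed.

Lemma opcoef_tens_id B t s' s : opcoef (tens mid B) (t :: s') s =
  if s is u :: us then (if t == u then opcoef B s' us else 0) else 0.
Proof. by rewrite opcoef_tens /mid; case: s => [|u us] //; case: eqP; rewrite ?mul1r. Qed.

Lemma opcoef_tens_equiv f X Y t s' s : (forall u, opcoef X s' u = opcoef Y s' u) ->
  opcoef (tens f X) (t :: s') s = opcoef (tens f Y) (t :: s') s.
Proof.
by move=> XY; rewrite !opcoef_tens; case: (f t) => [[c x]|] //; case: s => [|u us] //; rewrite XY.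
Qed.

Lemma opcoef_tensB f X Y t s :
  opcoef (tens f (opsub X Y)) t s = opcoef (tens f X) t s - opcoef (tens f Y) t s.
Proof. by rewrite /opsub -tensDr tensZr opcoefD opcoefZ mulN1r. Qed.

Definition diag (d : seq int -> Qv) : op := fun s => [:: (d s, s)].

Definition is_diag (A : op) (d : seq int -> Qv) :=
  forall t s, opcoef A t s = if t == s then d t else 0.

Lemma opid_diag : opid = diag (fun _ => 1).
Proof. by []. Qed.

Lemma diag_comp d e : opcomp (diag d) (diag e) = diag (fun s => e s * d s).
Proof. by apply: functional_extensionality => s; rewrite /opcomp /diag /applyop /=. Qed.

Lemma diag_compC d e : opcomp (diag d) (diag e) = opcomp (diag e) (diag d).
Proof. by rewrite !diag_comp; congr diag; apply: functional_extensionality => s; rewrite mulrC. Qed.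

Lemma diag_commute d A c : (forall s p, p \in A s -> d p.2 = c * d s) ->
  opcomp (diag d) A = opscale c (opcomp A (diag d)).
Proof.
move=> dA; apply: functional_extensionality => s.
rewrite /opcomp /opscale /diag /applyop /= cats0 scalevA.
have : forall p, p \in A s -> d p.2 = c * d s by move=> p; apply: dA.
elim: (A s) => [|p x IH] hp //=.
rewrite IH; last by move=> q hq; apply: hp; rewrite inE hq orbT.
by rewrite hp ?inE ?eqxx //=; congr ((_, _) :: _); ring.
Qed.

Lemma is_diag_diag d : is_diag (diag d) d.
Proof. by move=> t s; rewrite /opcoef coef_cons coef_nil addr0. Qed.

Lemma is_diagD A B d e : is_diag A d -> is_diag B e -> is_diag (opadd A B) (fun t => d t + e t).
Proof. by move=> hA hB t s; rewrite opcoefD hA hB; case: eqP; rewrite ?addr0. Qed.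

Lemma is_diagZ A d c : is_diag A d -> is_diag (opscale c A) (fun t => c * d t).
Proof. by move=> hA t s; rewrite opcoefZ hA; case: eqP; rewrite ?mulr0. Qed.

Lemma is_diagB A B d e : is_diag A d -> is_diag B e -> is_diag (opsub A B) (fun t => d t - e t).
Proof.
move=> hA hB; apply: (eq_ind _ _ (is_diagD hA (is_diagZ (-1) hB))) => //.
by apply: functional_extensionality => t; rewrite mulN1r.
Qed.

Lemma is_diag_comp A B d e : is_diag A d -> is_diag B e -> is_diag (opcomp A B) (fun t => e t * d t).
Proof.
move=> hA hB t s; rewrite opcoef_comp (@lincomb_coef_eq _ [:: (e t, t)]).
  by rewrite lincomb_cons lincomb_nil addr0 hA; case: eqP; rewrite ?mulr0.
by move=> w; rewrite -/(opcoef B t w) hB coef_cons coef_nil addr0 /= eq_sym.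
Qed.

Lemma is_diag_opprod (T : Type) (l : seq T) (X : T -> op) (d : T -> seq int -> Qv) :
  (forall j, is_diag (X j) (d j)) ->
  is_diag (opprod [seq X j | j <- l]) (fun t => \prod_(j <- l) d j t).
Proof.
move=> hX; elim: l => [|j l IH] t s /=.
  by rewrite /opprod /= opid_diag is_diag_diag big_nil.
by rewrite (is_diag_comp (hX j) IH) big_cons mulrC.
Qed.

Lemma opeq0_is_diag r A d : is_diag A d -> (forall t, size t = r -> d t = 0) -> opeq r A op0.
Proof. by move=> hA hd t ht s; rewrite -/(opcoef A t s) hA hd // -/(opcoef op0 t s) opcoef0; case: eqP. Qed.

Lemma congr_modE n x a : congr_mod n x a = ((x %% n)%Z == ((a %% n)%N)%:Z).
Proof. by rewrite /congr_mod -eqz_mod_dvd modz_nat. Qed.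

Lemma congr_mod_pred n t a : congr_mod n (t - 1) a = congr_mod n t a.+1.
Proof. by rewrite /congr_mod; congr (_ %| _)%Z; lia. Qed.

Lemma congr_mod_succ n t a : congr_mod n (t + 1) a.+1 = congr_mod n t a.
Proof. by rewrite /congr_mod; congr (_ %| _)%Z; lia. Qed.

Lemma congr_modn n u a : congr_mod n u (a %% n) = congr_mod n u a.
Proof. by rewrite !congr_modE modn_mod. Qed.

Lemma congr_mod_eq n t a : congr_mod n t a -> forall b, congr_mod n t b = (a %% n == b %% n)%N.
Proof. by move=> + b; rewrite !congr_modE => /eqP ->; rewrite eqz_nat. Qed.

Lemma congr_mod_next n t a : congr_mod n t a -> forall b, congr_mod n (t + 1) b = (a.+1 %% n == b %% n)%N.
Proof. by move=> ta b; apply: congr_mod_eq; rewrite congr_mod_succ. Qed.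

Lemma congr_mod_prev n t a : congr_mod n t a -> forall b, congr_mod n (t - 1) b = (a %% n == b.+1 %% n)%N.
Proof. by move=> ta b; rewrite congr_mod_pred; apply: congr_mod_eq. Qed.

Lemma congr_mod_absz n u i : (0 < n)%N -> (i < n)%N ->
  congr_mod n u i = (i == `|(u %% n)%Z|%N)%N.
Proof.
move=> n0 ilt; rewrite congr_modE modn_small //.
have h : (0 <= (u %% n)%Z)%R by apply: modz_ge0; rewrite eqz_nat -lt0n.
by rewrite -{1}(gez0_abs h) eqz_nat eq_sym.
Qed.

Lemma absz_modz_lt n u : (0 < n)%N -> (`|(u %% n)%Z| < n)%N.
Proof.
move=> n0; have h : (0 <= (u %% n)%Z)%R by apply: modz_ge0; rewrite eqz_nat -lt0n.
have : ((u %% n)%Z < n%:Z)%R by rewrite ltz_mod // eqz_nat -lt0n.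
by rewrite -{1}(gez0_abs h) ltz_nat.
Qed.

Lemma modS_small n k : (k < n)%N -> (k.+1 %% n = if k.+1 == n then 0 else k.+1)%N.
Proof.
move=> kn; case: eqP => [->|h]; first by rewrite modnn.
by rewrite modn_small //; lia.
Qed.

Lemma eqmod_small n m k : (m < n)%N -> (k < n)%N -> (m %% n == k %% n)%N = (m == k).
Proof. by move=> mn kn; rewrite !modn_small. Qed.

Lemma eqmodS n m k : (m < n)%N -> (k < n)%N -> (m.+1 %% n == k.+1 %% n)%N = (m == k).
Proof. by move=> mn kn; rewrite !modS_small //; repeat case: ifP => ?; lia. Qed.

Lemma modn_neq_succ n m : (1 < n)%N -> (m < n)%N -> (m %% n == m.+1 %% n)%N = false.
Proof. by move=> n1 mn; rewrite modS_small // modn_small //; case: ifP => ?; lia. Qed.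

Lemma modn_succ_neq n m : (1 < n)%N -> (m < n)%N -> (m.+1 %% n == m %% n)%N = false.
Proof. by move=> n1 mn; rewrite eq_sym modn_neq_succ. Qed.

Lemma v_neq0 : v != 0.
Proof. by rewrite /v tofrac_eq0 polyX_eq0. Qed.

Lemma v_sub_vV_neq0 : v - v^-1 != 0.
Proof.
have v2 : v ^+ 2 - 1 != 0.
  rewrite /v -tofracXn -tofrac1 -tofracB tofrac_eq0; apply/eqP.
  by move/(congr1 (horner^~ 0)) => /eqP; rewrite !hornerE /= oppr_eq0 oner_eq0.
apply: contraNneq v2 => h.
by rewrite expr2 -[X in _ - X](mulfV v_neq0) -mulrBr h mulr0.
Qed.

Ltac vring := let hv := fresh "hv" in have hv := mulfV v_neq0; ring: hv.

(* Turns residues of indices [m, k < n] into comparisons of [m] and [k],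
   then splits on every remaining boolean test. *)
Ltac case_indices n1 m k hm hk :=
  let E1 := fresh "E" in let E2 := fresh "E" in
  let E3 := fresh "E" in let E4 := fresh "E" in let E := fresh "E" in
  pose proof (eqmodS hm hk) as E1; pose proof (eqmod_small hm hk) as E2;
  pose proof (modn_neq_succ n1 hm) as E3; pose proof (modn_succ_neq n1 hm) as E4;
  rewrite ?E1 ?E2; case: (eqVneq m k) => E;
  [ subst k; rewrite ?eqxx ?E3 ?E4 | rewrite ?(negbTE E) ];
  repeat match goal with |- context [if ?b then _ else _] => case: b end;
  rewrite ?mulr1 ?mul1r ?expr1z ?exprN1 ?expr0z ?opprK ?oppr0.

Definition ktil n i (s : seq int) : Qv := \prod_(u <- s) (Kfac n i u * Kifac n i.+1 u).
Definition Ktil n i : op := diag (ktil n i).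

Definition Emon n i : monop := fun t => if congr_mod n (t - 1) i then Some (1, t - 1) else None.
Definition Fmon n i : monop := fun t => if congr_mod n t i then Some (1, t + 1) else None.
Definition KFmon n i : monop := fun t => Some (Kifac n i t * Kfac n i.+1 t, t).
Definition Pmon n i : monop := fun t => if congr_mod n t i then Some (1, t) else None.

Lemma Eop_split n i : Eop n i = opadd (tens (Emon n i) (Ktil n i)) (tens mid (Eop n i)).
Proof.
apply: functional_extensionality => [[|t s]] //=.
rewrite /opadd /tens /Emon /mid; congr (_ ++ _); first by case: ifP => //= _; rewrite mul1r.
by apply: eq_map => q; rewrite mul1r.
Qed.

Lemma Fop_split n i : Fop n i = opadd (tens (KFmon n i) (Fop n i)) (tens (Fmon n i) opid).
Proof.
apply: functional_extensionality => [[|t s]] //=.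
by rewrite /opadd /tens /Fmon /KFmon; congr (_ ++ _); case: ifP => //= _; rewrite mulr1.
Qed.

Lemma Kop_diag n k : Kop n k = diag (fun s => \prod_(u <- s) Kfac n k u).
Proof. by []. Qed.

Lemma Kiop_diag n k : Kiop n k = diag (fun s => \prod_(u <- s) Kifac n k u).
Proof. by []. Qed.

Lemma Eop_weight n i (f : int -> Qv) c s p :
  (forall t, congr_mod n (t - 1) i -> f (t - 1) = c * f t) ->
  p \in Eop n i s -> \prod_(u <- p.2) f u = c * \prod_(u <- s) f u.
Proof.
move=> hf; elim: s p => [|t s IH] p //=; rewrite mem_cat => /orP [].
  by case: ifP => // hc; rewrite inE => /eqP -> /=; rewrite !big_cons hf // mulrA.
by case/mapP => q hq -> /=; rewrite !big_cons IH //; ring.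
Qed.

Lemma Fop_weight n i (f : int -> Qv) c s p :
  (forall t, congr_mod n t i -> f (t + 1) = c * f t) ->
  p \in Fop n i s -> \prod_(u <- p.2) f u = c * \prod_(u <- s) f u.
Proof.
move=> hf; elim: s p => [|t s IH] p //=; rewrite mem_cat => /orP [].
  by case/mapP => q hq -> /=; rewrite !big_cons IH //; ring.
by case: ifP => // hc; rewrite inE => /eqP -> /=; rewrite !big_cons hf // mulrA.
Qed.

Lemma diag_Eop_commute n i (f : int -> Qv) c :
  (forall t, congr_mod n (t - 1) i -> f (t - 1) = c * f t) ->
  opcomp (diag (fun s => \prod_(u <- s) f u)) (Eop n i)
  = opscale c (opcomp (Eop n i) (diag (fun s => \prod_(u <- s) f u))).
Proof. by move=> hf; apply: diag_commute => s p; apply: Eop_weight. Qed.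

Lemma diag_Fop_commute n i (f : int -> Qv) c :
  (forall t, congr_mod n t i -> f (t + 1) = c * f t) ->
  opcomp (diag (fun s => \prod_(u <- s) f u)) (Fop n i)
  = opscale c (opcomp (Fop n i) (diag (fun s => \prod_(u <- s) f u))).
Proof. by move=> hf; apply: diag_commute => s p; apply: Fop_weight. Qed.

Definition rhoE n k m : Qv :=
  (if m == k then v * v else 1) * (if (m %% n == k.+1 %% n)%N then v^-1 else 1)
  * (if (m.+1 %% n == k %% n)%N then v^-1 else 1).
Definition rhoF n k m : Qv :=
  (if m == k then v^-1 * v^-1 else 1) * (if (m %% n == k.+1 %% n)%N then v else 1)
  * (if (m.+1 %% n == k %% n)%N then v else 1).

Section Commutation.
Variables (n k m : nat).
Hypotheses (n1 : (1 < n)%N) (hk : (k < n)%N) (hm : (m < n)%N).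

Lemma Ktil_Eop_commute :
  opcomp (Ktil n k) (Eop n m) = opscale (rhoE n k m) (opcomp (Eop n m) (Ktil n k)).
Proof.
apply: diag_Eop_commute => t tm; have tm1 : congr_mod n t m.+1 by rewrite -congr_mod_pred.
rewrite /Kfac /Kifac /rhoE !(congr_mod_eq tm) !(congr_mod_eq tm1).
by case_indices n1 m k hm hk; vring.
Qed.

Lemma Ktil_Fop_commute :
  opcomp (Ktil n k) (Fop n m) = opscale (rhoF n k m) (opcomp (Fop n m) (Ktil n k)).
Proof.
apply: diag_Fop_commute => t tm.
rewrite /Kfac /Kifac /rhoF !(congr_mod_eq tm) !(congr_mod_next tm).
by case_indices n1 m k hm hk; vring.
Qed.

Lemma Kop_Eop_commute :
  opcomp (Kop n k) (Eop n m) = opscale (v ^ epsp n k m) (opcomp (Eop n m) (Kop n k)).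
Proof.
apply: diag_Eop_commute => t tm; have tm1 : congr_mod n t m.+1 by rewrite -congr_mod_pred.
rewrite /Kfac /epsp !(congr_mod_eq tm) !(congr_mod_eq tm1).
have -> : (m.+1 %% n == k)%N = (m.+1 %% n == k %% n)%N by rewrite (modn_small hk).
by case_indices n1 m k hm hk; vring.
Qed.

Lemma Kop_Fop_commute :
  opcomp (Kop n k) (Fop n m) = opscale (v ^ (- epsp n k m)) (opcomp (Fop n m) (Kop n k)).
Proof.
apply: diag_Fop_commute => t tm.
rewrite /Kfac /epsp !(congr_mod_eq tm) !(congr_mod_next tm).
have -> : (m.+1 %% n == k)%N = (m.+1 %% n == k %% n)%N by rewrite (modn_small hk).
by case_indices n1 m k hm hk; vring.
Qed.

End Commutation.

Lemma Kifac_inv n i t : Kifac n i t = (Kfac n i t)^-1.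
Proof. by rewrite /Kifac /Kfac; case: ifP; rewrite ?invr1. Qed.

Lemma Kfac_neq0 n i t : Kfac n i t != 0.
Proof. by rewrite /Kfac; case: ifP => _; [exact: v_neq0 | exact: oner_neq0]. Qed.

Lemma Kop_Kiop n i : opcomp (Kop n i) (Kiop n i) = opid.
Proof.
rewrite diag_comp opid_diag; congr diag; apply: functional_extensionality => s.
by rewrite -big_split big1 // => u _ /=; rewrite Kifac_inv mulVf ?Kfac_neq0.
Qed.

Lemma Kiop_Kop n i : opcomp (Kiop n i) (Kop n i) = opid.
Proof. by rewrite diag_compC Kop_Kiop. Qed.

(** * The extra relations of [T] *)

Lemma prod_Kfac n i (t : seq int) :
  \prod_(u <- t) Kfac n i u = v ^+ count (fun u => congr_mod n u i) t.
Proof.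
elim: t => [|u t IH]; rewrite ?big_nil ?big_cons ?IH //=.
by rewrite /Kfac; case: ifP => _; rewrite ?mul1r ?add0n // exprS.
Qed.

(* Each [e_u] lies in exactly one weight space, so [K_0 ... K_{n-1}] scales it by [v]. *)
Lemma prod_Kfac_residues n u : (0 < n)%N -> \prod_(i <- iota 0 n) Kfac n i u = v.
Proof.
move=> n0; set ru := `|(u %% n)%Z|%N; have run : (ru < n)%N by apply: absz_modz_lt.
rewrite (bigD1_seq ru) ?iota_uniq ?mem_iota //= /Kfac (congr_mod_absz _ n0 run) eqxx.
rewrite big1_seq ?mulr1 // => i /andP [iru]; rewrite mem_iota /= add0n => ilt.
by rewrite (congr_mod_absz _ n0 ilt) (negbTE iru).
Qed.

Lemma Kop_prod_residues n r : (0 < n)%N ->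
  opeq r (opsub (opprod [seq Kop n i | i <- iota 0 n]) (opscale (v ^+ r) opid)) op0.
Proof.
move=> n0; apply: opeq0_is_diag.
  exact: is_diagB (is_diag_opprod _ (fun i => is_diag_diag _)) (is_diagZ _ (is_diag_diag _)).
move=> t <- /=; rewrite exchange_big /=.
under eq_bigr => u _ do rewrite prod_Kfac_residues //.
by rewrite big_const_seq count_predT iter_mulr_1 mulr1 subrr.
Qed.

(* On tensors of length [r], [K_i] acts by [v^c] with [c <= r] the number of entries
   congruent to [i]. *)
Lemma Kop_annihilated n r (i : nat) :
  opeq r (opprod [seq opsub (Kop n i) (opscale (v ^+ j) opid) | j <- iota 0 r.+1]) op0.
Proof.
apply: opeq0_is_diag.
  apply: (is_diag_opprod _ (fun j => _)) => j.
  exact: is_diagB (is_diag_diag _) (is_diagZ _ (is_diag_diag _)).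
move=> t tr; set c := count (fun u => congr_mod n u i) t.
have cr : (c < r.+1)%N by rewrite ltnS -tr count_size.
by rewrite (bigD1_seq c) ?iota_uniq ?mem_iota //= prod_Kfac mulr1 subrr mul0r.
Qed.

Lemma T_extra_relations_Kop n r : (0 < n)%N -> T_extra_relations_hold n r (Kop n).
Proof. by move=> n0; split=> [|i]; [apply: Kop_prod_residues | apply: Kop_annihilated]. Qed.

(** * Relations among the monomial operators on V *)

(* The eigenvalues of [K_k^-1 K_{k+1}] on [e_t] for [t = m + 1] and [t = m] (mod [n]). *)
Definition dFl n k m : Qv :=
  (if (m.+1 %% n == k %% n)%N then v^-1 else 1) * (if m == k then v else 1).
Definition dFr n k m : Qv :=
  (if m == k then v^-1 else 1) * (if (m %% n == k.+1 %% n)%N then v else 1).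

Lemma Emon_Fmon n i : mcomp (Emon n i) (Fmon n i) = Pmon n i.
Proof.
apply: functional_extensionality => t; rewrite /mcomp /Emon /Fmon /Pmon.
by case: ifP => // ti; rewrite addrK ti mulr1.
Qed.

Lemma Fmon_Emon n i : mcomp (Fmon n i) (Emon n i) = Pmon n i.+1.
Proof.
apply: functional_extensionality => t; rewrite /mcomp /Emon /Fmon /Pmon congr_mod_pred.
by case: ifP => // ti; rewrite congr_mod_pred ti subrK mulr1.
Qed.

Lemma KFmonC n i j : mcomp (KFmon n i) (KFmon n j) = mcomp (KFmon n j) (KFmon n i).
Proof. by apply: functional_extensionality => t; rewrite /mcomp /KFmon mulrC. Qed.

Section MonomialRelations.
Variables (n i j : nat).
Hypotheses (n1 : (1 < n)%N) (hi : (i < n)%N) (hj : (j < n)%N).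

Lemma Emon_Emon : mcomp (Emon n i) (Emon n i) = mzero.
Proof.
apply: functional_extensionality => t; rewrite /mcomp /Emon.
by case: ifP => // ti; rewrite (congr_mod_prev ti) (modn_neq_succ n1 hi).
Qed.

Lemma Fmon_Fmon : mcomp (Fmon n i) (Fmon n i) = mzero.
Proof.
apply: functional_extensionality => t; rewrite /mcomp /Fmon.
by case: ifP => // ti; rewrite (congr_mod_next ti) (modn_succ_neq n1 hi).
Qed.

Lemma Emon_Fmon_neq : i != j -> mcomp (Emon n i) (Fmon n j) = mzero.
Proof.
move=> ij; apply: functional_extensionality => t; rewrite /mcomp /Emon /Fmon.
by case: ifP => // tj; rewrite addrK (congr_mod_eq tj) (eqmod_small hj hi) eq_sym (negbTE ij).
Qed.

Lemma Fmon_Emon_neq : i != j -> mcomp (Fmon n j) (Emon n i) = mzero.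
Proof.
move=> ij; apply: functional_extensionality => t; rewrite /mcomp /Emon /Fmon.
by case: ifP => // ti; rewrite (congr_mod_eq ti) (eqmod_small hi hj) (negbTE ij).
Qed.

Lemma KFmon_Fmon : mcomp (KFmon n i) (Fmon n j) = mscale (dFl n i j) (Fmon n j).
Proof.
apply: functional_extensionality => t; rewrite /mcomp /mscale /Fmon /KFmon.
by case: ifP => // tj; rewrite /Kfac /Kifac !(congr_mod_next tj) (eqmodS hj hi) mul1r mulr1.
Qed.

Lemma Fmon_KFmon : mcomp (Fmon n j) (KFmon n i) = mscale (dFr n i j) (Fmon n j).
Proof.
apply: functional_extensionality => t; rewrite /mcomp /mscale /Fmon /KFmon.
by case: ifP => // tj; rewrite /Kfac /Kifac !(congr_mod_eq tj) (eqmod_small hj hi) mulr1.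
Qed.

Lemma Emon_KFmon : mcomp (Emon n i) (KFmon n j) = mscale (dFl n j i) (Emon n i).
Proof.
apply: functional_extensionality => t; rewrite /mcomp /mscale /Emon /KFmon.
case: ifP => // ti; have ti1 : congr_mod n t i.+1 by rewrite -congr_mod_pred.
by rewrite /Kfac /Kifac !(congr_mod_eq ti1) (eqmodS hi hj) mulr1.
Qed.

Lemma KFmon_Emon : mcomp (KFmon n j) (Emon n i) = mscale (dFr n j i) (Emon n i).
Proof.
apply: functional_extensionality => t; rewrite /mcomp /mscale /Emon /KFmon.
by case: ifP => // ti; rewrite /Kfac /Kifac !(congr_mod_eq ti) (eqmod_small hi hj) mul1r mulr1.
Qed.

(* The symmetry of the Cartan matrix. *)
Lemma dFl_rhoF : dFl n j i * rhoF n i j = dFr n j i.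
Proof.
rewrite /dFl /rhoF /dFr [(j %% n == _)%N]eq_sym [(j.+1 %% n == _)%N]eq_sym.
case: (eqVneq i j) => [<-|ij].
  by rewrite ?eqxx ?(modn_neq_succ n1 hi) ?(modn_succ_neq n1 hi); vring.
by case: (i.+1 %% n == j %% n)%N; case: (i %% n == j.+1 %% n)%N; vring.
Qed.

Lemma nonadj_mod : ~~ adj n i j ->
  (j %% n == i.+1 %% n)%N = false /\ (i %% n == j.+1 %% n)%N = false.
Proof.
rewrite /adj negb_or => /andP [h1 h2].
by rewrite (modn_small hi) (modn_small hj); split; apply/negbTE.
Qed.

Lemma Emon_Emon_nonadj : ~~ adj n i j -> mcomp (Emon n i) (Emon n j) = mzero.
Proof.
move=> ija; apply: functional_extensionality => t; rewrite /mcomp /Emon.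
by case: ifP => // tj; rewrite (congr_mod_prev tj); have [-> _] := nonadj_mod ija.
Qed.

Lemma Fmon_Fmon_nonadj : ~~ adj n i j -> mcomp (Fmon n i) (Fmon n j) = mzero.
Proof.
move=> ija; apply: functional_extensionality => t; rewrite /mcomp /Fmon.
by case: ifP => // tj; rewrite (congr_mod_next tj) eq_sym; have [_ ->] := nonadj_mod ija.
Qed.

Lemma rhoE_nonadj : i != j -> ~~ adj n i j -> rhoE n i j = 1.
Proof.
move=> ij ija; rewrite /rhoE eq_sym (negbTE ij).
by have [h1 h2] := nonadj_mod ija; rewrite h1 eq_sym h2 !mulr1.
Qed.

Lemma dF_nonadj : i != j -> ~~ adj n i j -> dFl n i j = 1 /\ dFr n i j = 1.
Proof.
move=> ij ija; rewrite /dFl /dFr [j == i]eq_sym (negbTE ij).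
by have [h1 h2] := nonadj_mod ija; rewrite eq_sym h2 h1 !mulr1.
Qed.

Lemma rhoE_same : rhoE n i i = v * v.
Proof. by rewrite /rhoE eqxx (modn_neq_succ n1 hi) (modn_succ_neq n1 hi) !mulr1. Qed.

Lemma dF_same : dFr n i i = v^-1 /\ dFl n i i = v.
Proof. by rewrite /dFr /dFl eqxx (modn_neq_succ n1 hi) (modn_succ_neq n1 hi) mulr1 mul1r. Qed.


Lemma Fmon_Fmon_dir : ~~ (i %% n == j.+1 %% n)%N -> mcomp (Fmon n i) (Fmon n j) = mzero.
Proof.
move=> ij; apply: functional_extensionality => t; rewrite /mcomp /Fmon.
by case: ifP => // tj; rewrite (congr_mod_next tj) eq_sym (negbTE ij).
Qed.

Lemma dF_dir : (i %% n == j.+1 %% n)%N -> ~~ (j %% n == i.+1 %% n)%N -> i != j ->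
  [/\ dFr n j i = v, dFl n j i = 1, dFr n i j = 1 & dFl n i j = v^-1].
Proof.
move=> hA hB ij; have ji : (j == i) = false by rewrite eq_sym (negbTE ij).
rewrite /dFr /dFl (negbTE ij) ji hA (negbTE hB).
rewrite [(i.+1 %% n == _)%N]eq_sym (negbTE hB) [(j.+1 %% n == _)%N]eq_sym hA.
by split; rewrite ?mulr1 ?mul1r.
Qed.

End MonomialRelations.

Section Adjacency.
Variables (n i j : nat).
Hypotheses (n2 : (2 < n)%N) (hi : (i < n)%N) (hj : (j < n)%N) (ija : adj n i j).

Lemma adj_cases :
  ((i %% n == j.+1 %% n)%N && ~~ (j %% n == i.+1 %% n)%N) ||
  ((j %% n == i.+1 %% n)%N && ~~ (i %% n == j.+1 %% n)%N).
Proof. by move: ija; rewrite /adj (modn_small hi) (modn_small hj) !modS_small //; repeat case: ifP => ?; lia. Qed.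

Lemma adj_neq : i != j.
Proof. by move: ija; apply: contraTneq => ->; rewrite /adj !modS_small //; case: ifP => ?; lia. Qed.

Lemma rhoE_adj : rhoE n i j = v^-1.
Proof.
rewrite /rhoE eq_sym (negbTE adj_neq) [(j.+1 %% n == _)%N]eq_sym.
by case/orP: adj_cases => /andP [-> /negbTE ->]; rewrite ?mulr1 ?mul1r.
Qed.

Lemma Emon_aba : mcomp (mcomp (Emon n i) (Emon n j)) (Emon n i) = mzero.
Proof.
apply: functional_extensionality => t; rewrite /mcomp /Emon.
case: ifP => // t1; rewrite (congr_mod_prev t1); case: ifP => // ij.
have t2 : congr_mod n (t - 1 - 1) j by rewrite (congr_mod_prev t1) ij.
rewrite (congr_mod_prev t2).
by have := adj_cases; rewrite ij /= andbF orbF => /negbTE ->.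
Qed.

Lemma Fmon_aba : mcomp (mcomp (Fmon n i) (Fmon n j)) (Fmon n i) = mzero.
Proof.
apply: functional_extensionality => t; rewrite /mcomp /Fmon.
case: ifP => // t1; rewrite (congr_mod_next t1); case: ifP => // ij.
have t2 : congr_mod n (t + 1) j by rewrite (congr_mod_next t1).
have ji : (j %% n == i.+1 %% n)%N by rewrite eq_sym ij.
by have := adj_cases; rewrite ji andbF /= => /negbTE ji'; rewrite (congr_mod_next t2) eq_sym ji'.
Qed.

End Adjacency.

(** * The relations (Q5)-(Q7) *)

(* [opcomp] distributes over [opadd] on the left only coefficientwise. *)
Lemma opcoef_comp_compDl X Y1 Y2 Z t s :
  opcoef (opcomp X (opcomp (opadd Y1 Y2) Z)) t s =
  opcoef (opcomp X (opcomp Y1 Z)) t s + opcoef (opcomp X (opcomp Y2 Z)) t s.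
Proof.
rewrite (@opcoef_compr X _ (opadd (opcomp Y1 Z) (opcomp Y2 Z))).
  by rewrite opcompDr opcoefD.
by move=> w; rewrite opcoef_compDl opcoefD.
Qed.

Ltac expand_opcoef :=
  repeat first [ rewrite opcompDr | rewrite opcompZr | rewrite opcompZl
               | rewrite opcoefD | rewrite opcoefZ | rewrite opcoef_compDl
               | rewrite opcoef_comp_compDl ].

Lemma opcoef_Eop_nil n i A s : opcoef (opcomp A (Eop n i)) [::] s = 0.
Proof. exact: coef_nil. Qed.

Lemma opcoef_Fop_nil n i A s : opcoef (opcomp A (Fop n i)) [::] s = 0.
Proof. exact: coef_nil. Qed.

Definition qbracket (x : Qv) : Qv := (x - x^-1) / (v - v^-1).

Lemma qbracketM k x : qbracket (k * x) = k^-1 * qbracket x + (k - k^-1) / (v - v^-1) * x.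
Proof. by rewrite /qbracket invfM; ring. Qed.

Definition EFrhs n i j : op :=
  if i == j then opscale (v - v^-1)^-1
     (opsub (opcomp (Kop n i) (Kiop n (i.+1 %% n))) (opcomp (Kiop n i) (Kop n (i.+1 %% n))))
  else op0.

Lemma EFrhs_diag n i : is_diag (EFrhs n i i) (fun s => qbracket (ktil n i s)).
Proof.
have Kfac_mod : Kfac n (i.+1 %% n) =1 Kfac n i.+1 by move=> u; rewrite /Kfac congr_modn.
move=> t s; rewrite /EFrhs eqxx !Kop_diag !Kiop_diag.
rewrite (is_diagZ _ (is_diagB (is_diag_comp (is_diag_diag _) (is_diag_diag _))
                              (is_diag_comp (is_diag_diag _) (is_diag_diag _)))).
case: eqP => // _; rewrite /qbracket /ktil mulrC -prodfV -!big_split /=; congr ((_ - _) / _).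
  by apply: eq_bigr => u _; rewrite !Kifac_inv Kfac_mod [RHS]mulrC.
by apply: eq_bigr => u _; rewrite !Kifac_inv Kfac_mod invfM invrK [RHS]mulrC.
Qed.

Lemma kt_bracket n i t :
  (Kfac n i t * Kifac n i.+1 t - (Kfac n i t * Kifac n i.+1 t)^-1) / (v - v^-1) =
  (congr_mod n t i)%:R - (congr_mod n t i.+1)%:R.
Proof.
have vV := mulfV v_neq0; have wV := mulfV v_sub_vV_neq0.
rewrite /Kfac /Kifac; case: (congr_mod n t i); case: (congr_mod n t i.+1) => /=.
- by rewrite vV invr1 !subrr mul0r.
- by rewrite !mulr1 subr0.
- by rewrite !mul1r invrK -opprB mulNr wV sub0r.
by rewrite mulr1 invr1 !subrr mul0r.
Qed.

Lemma opcoef_tens_Pmon n i X t s' s :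
  opcoef (tens (Pmon n i) X) (t :: s') s = (congr_mod n t i)%:R * opcoef (tens mid X) (t :: s') s.
Proof. by rewrite !opcoef_tens /Pmon /mid; case: (congr_mod n t i); rewrite ?mul1r ?mul0r. Qed.

Lemma opcoef_tens_KFmon n i X t s' s :
  opcoef (tens (KFmon n i) X) (t :: s') s =
  (Kfac n i t * Kifac n i.+1 t)^-1 * opcoef (tens mid X) (t :: s') s.
Proof.
rewrite !opcoef_tens /KFmon /mid !Kifac_inv invfM invrK.
by case: s => [|u us]; rewrite ?mulr0 //; case: eqP; rewrite ?mulr0 ?mul1r.
Qed.

Lemma EFrhs_cons n i t s' s : opcoef (EFrhs n i i) (t :: s') s =
  opcoef (tens (KFmon n i) (EFrhs n i i)) (t :: s') s
  + opcoef (tens (Pmon n i) (Ktil n i)) (t :: s') s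
  - opcoef (tens (Pmon n i.+1) (Ktil n i)) (t :: s') s.
Proof.
rewrite opcoef_tens_KFmon !opcoef_tens_Pmon !opcoef_tens_id EFrhs_diag.
case: s => [|u us] /=; first by rewrite !mulr0 addr0 subrr.
rewrite eqseq_cons; case: eqP => _ /=; last by rewrite !mulr0 addr0 subrr.
rewrite EFrhs_diag is_diag_diag; case: eqP => _ /=; last by rewrite !mulr0 addr0 subrr.
by rewrite /ktil big_cons qbracketM -/(ktil n i s') kt_bracket; ring.
Qed.

Section CommutatorEF.
Variables (n i j : nat).
Hypotheses (n1 : (1 < n)%N) (hi : (i < n)%N) (hj : (j < n)%N).

Let EF := opsub (opcomp (Eop n i) (Fop n j)) (opcomp (Fop n j) (Eop n i)).

Lemma commEF_cons t s' s : opcoef EF (t :: s') s =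
  opcoef (tens (KFmon n j) EF) (t :: s') s
  + opcoef (tens (mcomp (Emon n i) (Fmon n j)) (Ktil n i)) (t :: s') s
  - opcoef (tens (mcomp (Fmon n j) (Emon n i)) (Ktil n i)) (t :: s') s.
Proof.
rewrite /EF opcoef_tensB /opsub [in LHS]Eop_split [in LHS]Fop_split; expand_opcoef.
rewrite !tens_comp !opcomp_idr !opcomp_idl !mcomp_idl !mcomp_idr.
rewrite (Emon_KFmon hi hj) (KFmon_Emon hi hj) (Ktil_Fop_commute n1 hi hj).
rewrite !tensZr !tensZl !opcoefZ -(dFl_rhoF j n1 hi); ring.
Qed.

Lemma commEF : op_equiv EF (EFrhs n i j).
Proof.
elim=> [|t s' IH] s.
  rewrite /EF opcoefB !opcoef_Eop_nil opcoef_Fop_nil subrr.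
  case: (eqVneq i j) => [<-|ij]; last by rewrite /EFrhs (negbTE ij) opcoef0.
  by rewrite EFrhs_diag /ktil big_nil /qbracket invr1 subrr mul0r if_same.
rewrite commEF_cons (opcoef_tens_equiv _ _ _ IH).
case: (eqVneq i j) => [<-|ij]; first by rewrite Emon_Fmon Fmon_Emon -EFrhs_cons.
rewrite (Emon_Fmon_neq hi hj ij) (Fmon_Emon_neq hi hj ij) !tens0l !opcoef0.
by rewrite /EFrhs (negbTE ij) tens0r opcoef0 !subr0 addr0.
Qed.

End CommutatorEF.

Section FarApart.
Variables (n i j : nat).
Hypotheses (n1 : (1 < n)%N) (hi : (i < n)%N) (hj : (j < n)%N).
Hypotheses (ij : i != j) (ija : ~~ adj n i j).

Let ji : j != i. Proof. by rewrite eq_sym. Qed.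
Let jia : ~~ adj n j i. Proof. by rewrite /adj orbC. Qed.

Lemma Eop_commute_far : op_equiv (opcomp (Eop n i) (Eop n j)) (opcomp (Eop n j) (Eop n i)).
Proof.
elim=> [|t s' IH] s; first by rewrite !opcoef_Eop_nil.
rewrite [Eop n i]Eop_split [Eop n j]Eop_split; expand_opcoef.
rewrite !tens_comp !mcomp_idl !mcomp_idr (Emon_Emon_nonadj hi hj ija) (Emon_Emon_nonadj hj hi jia).
rewrite !tens0l !opcoef0 (Ktil_Eop_commute n1 hi hj) (Ktil_Eop_commute n1 hj hi).
rewrite (rhoE_nonadj hi hj ij ija) (rhoE_nonadj hj hi ji jia) !tensZr !opcoefZ !mul1r.
rewrite !opcoef_tens_id; case: s => [|u us]; first by ring.
by case: eqP => _; rewrite ?IH; ring.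
Qed.

Lemma Fop_commute_far : op_equiv (opcomp (Fop n i) (Fop n j)) (opcomp (Fop n j) (Fop n i)).
Proof.
elim=> [|t s' IH] s; first by rewrite !opcoef_Fop_nil.
rewrite [Fop n i]Fop_split [Fop n j]Fop_split; expand_opcoef.
rewrite !tens_comp !opcomp_idr !opcomp_idl (KFmonC n j i).
rewrite (Fmon_Fmon_nonadj hi hj ija) (Fmon_Fmon_nonadj hj hi jia) !tens0l !opcoef0.
rewrite (KFmon_Fmon hi hj) (KFmon_Fmon hj hi) (Fmon_KFmon hi hj) (Fmon_KFmon hj hi).
have [-> ->] := dF_nonadj hi hj ij ija; have [-> ->] := dF_nonadj hj hi ji jia.
by rewrite !tensZl !opcoefZ !mul1r (opcoef_tens_equiv _ _ _ IH); ring.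
Qed.

End FarApart.

(** * The Serre relations (Q8), (Q9) *)

Definition serre (X Y : op) : op :=
  opadd (opsub (opprod [:: X; X; Y]) (opscale (v + v^-1) (opprod [:: X; Y; X])))
        (opprod [:: Y; X; X]).

Lemma opcompCA A B X : opcomp A B = opcomp B A ->
  opcomp A (opcomp B X) = opcomp B (opcomp A X).
Proof. by move=> AB; rewrite opcompA AB -opcompA. Qed.

Lemma opcompCA_scale A B X c : opcomp A B = opscale c (opcomp B A) ->
  opcomp A (opcomp B X) = opscale c (opcomp B (opcomp A X)).
Proof. by move=> AB; rewrite opcompA AB opcompZl -opcompA. Qed.

Lemma mcomp_annihilate f g h : mcomp f g = mzero -> mcomp (mcomp h f) g = mzero.
Proof. by move=> fg; rewrite -mcompA fg mcomp0r. Qed.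

Lemma mcompA_scale f g h X c : mcomp f g = mscale c h ->
  mcomp (mcomp X f) g = mscale c (mcomp X h).
Proof. by move=> fg; rewrite -mcompA fg mcompZr. Qed.

Section Serre.
Variables (n i j : nat).
Hypotheses (n2 : (2 < n)%N) (hi : (i < n)%N) (hj : (j < n)%N) (ija : adj n i j).

Let n1 : (1 < n)%N := ltnW n2.
Let jia : adj n j i. Proof. by rewrite /adj orbC. Qed.

Lemma serre_Eop_cons t s' s :
  opcoef (serre (Eop n i) (Eop n j)) (t :: s') s =
  opcoef (tens mid (serre (Eop n i) (Eop n j))) (t :: s') s.
Proof.
rewrite /serre /opsub !opprod3 -!tensDr !tensZr.
rewrite [in LHS](Eop_split n i) [in LHS](Eop_split n j); expand_opcoef.
rewrite !tens_comp !mcomp_idl !mcomp_idr !mcompA (Emon_Emon n1 hi) (Emon_aba n2 hi hj ija).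
rewrite ?(mcomp_annihilate _ (Emon_Emon n1 hi)) ?mcomp0l ?mcomp0r !tens0l !opcoef0.
have c1 := Ktil_Eop_commute n1 hi hi; have c2 := Ktil_Eop_commute n1 hi hj.
have c3 := Ktil_Eop_commute n1 hj hi; have c4 := Ktil_Eop_commute n1 hj hj.
have c5 : opcomp (Ktil n j) (Ktil n i) = opcomp (Ktil n i) (Ktil n j) by apply: diag_compC.
repeat first [ rewrite (opcompCA_scale _ c1) | rewrite (opcompCA_scale _ c2)
             | rewrite (opcompCA_scale _ c3) | rewrite (opcompCA_scale _ c4)
             | rewrite (opcompCA _ c5)
             | rewrite c1 | rewrite c2 | rewrite c3 | rewrite c4 | rewrite c5
             | rewrite opcompZr | rewrite opcompZl ].
rewrite !tensZr !opcoefZ (rhoE_same n1 hi) (rhoE_adj n2 hi hj ija) (rhoE_adj n2 hj hi jia).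
vring.
Qed.

Lemma serre_Fop_cons t s' s :
  opcoef (serre (Fop n i) (Fop n j)) (t :: s') s =
  opcoef (tens (mcomp (mcomp (KFmon n i) (KFmon n i)) (KFmon n j)) (serre (Fop n i) (Fop n j)))
    (t :: s') s.
Proof.
have KF_iji : mcomp (mcomp (KFmon n i) (KFmon n j)) (KFmon n i) =
              mcomp (mcomp (KFmon n i) (KFmon n i)) (KFmon n j).
  by rewrite -mcompA KFmonC mcompA.
have KF_jii : mcomp (mcomp (KFmon n j) (KFmon n i)) (KFmon n i) =
              mcomp (mcomp (KFmon n i) (KFmon n i)) (KFmon n j).
  by rewrite KFmonC -mcompA KFmonC mcompA.
rewrite /serre /opsub !opprod3 -!tensDr !tensZr.
rewrite [in LHS](Fop_split n i) [in LHS](Fop_split n j); expand_opcoef.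
rewrite !tens_comp !opcomp_idr !opcomp_idl !mcompA.
have F_ii := Fmon_KFmon hi hi; have F_ij := Fmon_KFmon hj hi.
have F_ji := Fmon_KFmon hi hj; have F_jj := Fmon_KFmon hj hj.
have KF_ii := KFmon_Fmon hi hi; have KF_ij := KFmon_Fmon hi hj.
have KF_ji := KFmon_Fmon hj hi; have KF_jj := KFmon_Fmon hj hj.
rewrite ?(mcompA_scale _ F_ii, mcompA_scale _ F_ij, mcompA_scale _ F_ji, mcompA_scale _ F_jj,
          mcompA_scale _ KF_ii, mcompA_scale _ KF_ij, mcompA_scale _ KF_ji, mcompA_scale _ KF_jj,
          F_ii, F_ij, F_ji, F_jj, KF_ii, KF_ij, KF_ji, KF_jj, mcompZl, mcompZr, mscaleA,
          Fmon_Fmon n1 hi, Fmon_Fmon n1 hj, mcomp_annihilate _ (Fmon_Fmon n1 hi),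
          mcomp_annihilate _ (Fmon_Fmon n1 hj), Fmon_aba n2 hi hj ija, Fmon_aba n2 hj hi jia,
          KF_iji, KF_jii, mcomp0l, mcomp0r, mscale0).
rewrite !tensZl !tens0l !opcoefZ !opcoef0.
have [-> ->] := dF_same n1 hi.
case/orP: (adj_cases n2 hi hj ija) => /andP [hA hB].
  have [-> -> -> ->] := dF_dir hA hB (adj_neq n2 hi hj ija).
  by rewrite (Fmon_Fmon_dir hB) tens0l opcoef0; vring.
have [-> -> -> ->] := dF_dir hA hB (adj_neq n2 hj hi jia).
by rewrite (Fmon_Fmon_dir hB) tens0l opcoef0; vring.
Qed.

Lemma serre_Eop : op_equiv (serre (Eop n i) (Eop n j)) op0.
Proof.
elim=> [|t s' IH] s; first by rewrite /opcoef /= coef_nil.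
by rewrite serre_Eop_cons (opcoef_tens_equiv _ _ _ IH) tens0r.
Qed.

Lemma serre_Fop : op_equiv (serre (Fop n i) (Fop n j)) op0.
Proof.
elim=> [|t s' IH] s; first by rewrite /opcoef /= coef_nil.
by rewrite serre_Fop_cons (opcoef_tens_equiv _ _ _ IH) tens0r.
Qed.

End Serre.

Lemma U_relations_tensor n r : (2 < n)%N -> U_relations_hold n r (Eop n) (Fop n) (Kop n) (Kiop n).
Proof.
move=> n2 i j; have n1 := ltnW n2; have hi := ltn_ord i; have hj := ltn_ord j.
split; first by rewrite !Kop_diag diag_compC.
split; first by rewrite Kop_Kiop.
split; first by rewrite Kiop_Kop.
split; first by rewrite (Kop_Eop_commute n1 hi hj).
split; first by rewrite (Kop_Fop_commute n1 hi hj).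
split; first exact/op_equiv_opeq/(commEF n1 hi hj).
split=> ija; last by split; apply/op_equiv_opeq; [apply: serre_Eop | apply: serre_Fop].
case: (eqVneq i j) => [<-|ij]; first by [].
by split; apply/op_equiv_opeq; [apply: Eop_commute_far | apply: Fop_commute_far].
Qed.

Theorem proposition1p6p5 (n r : nat) :
  (3 <= r)%N -> (r < n)%N ->
  (* the elements K_1...K_n - v^r and prod_j (K_i - v^j) act as zero *)
  T_extra_relations_hold n r (Kop n)
  /\
  (* consequently the action map on generators respects all defining
     relations of T (Q1-Q9 and the extra ones), i.e. it induces the
     algebra map gamma : T -> End(V^{(x)r}), whose image is S^_v(n,r) *)
  (U_relations_hold n r (Eop n) (Fop n) (Kop n) (Kiop n)
   /\ T_extra_relations_hold n r (Kop n)).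
Proof.
move=> r3 rn; have n2 : (2 < n)%N by lia.
have T_rel := T_extra_relations_Kop r (ltnW (ltnW n2)).
by split=> //; split=> //; apply: U_relations_tensor.
Qed.
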